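(* Let $(\mathcal T_n)_{n\in\mathbb N_0}$ be a generalised preferential attachment tree with deterministic attachment function $f:\mathbb N_0\to(0,\infty)$, and assume that for some $\kappa>0$ and all $n\in\mathbb N_0$, \[\max_{i\le n}\frac{f(i)}{i+1}\le\kappa\frac{f(n)}{n+1}.\] Let $\mathcal M_n=\max_{u\in\mathcal T_n}\deg^+(u,\mathcal T_n)$. Then for every $\varepsilon>0$ there exists $r>0$ such that \[\mathbb P\big(\forall n\in\mathbb N:\ \mathcal M_n\,n^{-1/(2\kappa)}\ge r\big)\ge1-\varepsilon.\]
   Context: Generalised preferential attachment tree with deterministic $f:\mathbb N_0\to(0,\infty)$: $\mathcal T_0$ is a single node labelled $0$; given $\mathcal T_k$ (nodes $0,\dots,k$), choose a node $j$ with probability $f(\deg^+(j,\mathcal T_k))/\mathcal Z_k$, where $\mathcal Z_k=\sum_{j=0}^kf(\deg^+(j,\mathcal T_k))$, and add node $k+1$ with an edge directed from $j$ to $k+1$. $\deg^+(u,T)$ is the out-degree of $u$ in the directed tree $T$. *)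

From HB Require Import structures.
From mathcomp Require Import all_boot all_order all_algebra.
From mathcomp Require Import all_classical all_reals all_analysis.
Set Implicit Arguments. Unset Strict Implicit. Unset Printing Implicit Defensive.
Import Order.TTheory GRing.Theory Num.Theory.
Local Open Scope classical_set_scope.
Local Open Scope ring_scope.

(* A tree T_k on nodes 0..k is encoded by its attachment sequence
   s = [:: s_0; ...; s_{k-1}], where node i+1 was attached to parent s_i. *)
Definition deg_out (s : seq nat) (u : nat) : nat := count (pred1 u) s.

Definition Zpart {R : realType} (f : nat -> R) (s : seq nat) : R :=
  \sum_(j < (size s).+1) f (deg_out s j).

Definition step_prob {R : realType} (f : nat -> R) (s : seq nat) (j : nat) : R :=
  if (j <= size s)%N then f (deg_out s j) / Zpart f s else 0.

Definition path_weight {R : realType} (f : nat -> R) (s : seq nat) : R :=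
  \prod_(i < size s) step_prob f (take i s) (nth 0%N s i).

(* J k w = parent of node k+1; history up to time k *)
Definition hist {T : Type} (J : nat -> T -> nat) (k : nat) (w : T) : seq nat :=
  [seq J i w | i <- iota 0 k].

Definition is_GPA {R : realType} {d} {T : measurableType d}
  (P : probability T R) (f : nat -> R) (J : nat -> T -> nat) : Prop :=
  (forall k j, measurable [set w : T | J k w = j]) /\
  (forall s : seq nat,
     P [set w : T | hist J (size s) w = s] = (path_weight f s)%:E).

Definition maxdeg {T : Type} (J : nat -> T -> nat) (n : nat) (w : T) : nat :=
  (\max_(u < n.+1) deg_out (hist J n w) u)%N.

From HB Require Import structures.
From mathcomp Require Import all_boot all_order all_algebra.
From mathcomp Require Import all_classical all_reals all_analysis.
From mathcomp Require Import ring lra zify.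
Set Implicit Arguments.
Unset Strict Implicit.
Unset Printing Implicit Defensive.
Import Order.TTheory GRing.Theory Num.Theory.

(* The regularity assumption
   on f gives Z_n <= kappa f(M_n) (2n+1) / (M_n+1), so a node of maximal degree is
   chosen with probability at least (M_n+1) / (kappa (2n+1)).  As M_n never
   decreases and increases when such a node is chosen, the potential
   hprod M_n / aprod n is a supermartingale starting at 1, and by the maximal
   inequality hprod M_n < c aprod n for all n <= N with probability at least
   1 - 1/c.  Since hprod m ^ 2 >= 1/(4m) and aprod n ^ 2 <= n^(-1/(2 kappa)), this
   forces M_n n^(-1/(2 kappa)) >= 1/(4 c^2); continuity from above lets N -> oo. *)

Lemma takel_rcons (T : Type) (s : seq T) x k : (k <= size s)%N ->
  take k (rcons s x) = take k s.
Proof. by move=> h; rewrite -cats1 takel_cat. Qed.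

Definition maxdeg_seq (s : seq nat) : nat := (\max_(u < (size s).+1) deg_out s u)%N.

Lemma deg_out_rcons s j u : deg_out (rcons s j) u = (deg_out s u + (j == u))%N.
Proof. by rewrite /deg_out -cats1 count_cat /= addn0. Qed.

Lemma sum_deg_out s m : (\sum_(j < m) deg_out s j)%N = count (fun x => x < m)%N s.
Proof.
elim: m => [|m IH].
  by rewrite big_ord0 (@eq_count _ _ pred0) ?count_pred0.
rewrite big_ord_recr /= IH /deg_out -count_predUI.
rewrite (@eq_count _ (predI _ _) pred0) ?count_pred0 ?addn0; last first.
  by move=> x /=; rewrite andbC; case: eqP => // ->; rewrite ltnn.
by apply: eq_count => x /=; rewrite ltnS [in RHS]leq_eqVlt orbC.
Qed.

Lemma sum_deg_out_le s : (\sum_(j < (size s).+1) deg_out s j <= size s)%N.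
Proof. by rewrite sum_deg_out count_size. Qed.

Lemma leq_deg_maxdeg_seq s u : (u <= size s)%N -> (deg_out s u <= maxdeg_seq s)%N.
Proof.
move=> us; have := @leq_bigmax _ (fun i : 'I_(size s).+1 => deg_out s i) (inord u).
by rewrite inordK.
Qed.

Lemma maxdeg_seq_rcons s j : (maxdeg_seq s <= maxdeg_seq (rcons s j))%N.
Proof.
apply/bigmax_leqP => u _.
have u_le : (u <= size (rcons s j))%N by rewrite size_rcons; exact: ltnW (ltn_ord u).
by apply: leq_trans _ (leq_deg_maxdeg_seq u_le); rewrite deg_out_rcons leq_addr.
Qed.

Lemma maxdeg_seq_argmax s : exists2 u, (u <= size s)%N & maxdeg_seq s = deg_out s u.
Proof.
have [u hu] := @bigop.eq_bigmax _ (fun i : 'I_(size s).+1 => deg_out s i)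
  ltac:(by rewrite card_ord).
by exists u; [rewrite -ltnS | rewrite /maxdeg_seq hu].
Qed.

Lemma maxdeg_seq_rcons_argmax s u : (u <= size s)%N ->
  maxdeg_seq s = deg_out s u -> (maxdeg_seq s < maxdeg_seq (rcons s u))%N.
Proof.
move=> us ->; have u_le : (u <= size (rcons s u))%N by rewrite size_rcons leqW.
by apply: leq_trans _ (leq_deg_maxdeg_seq u_le); rewrite deg_out_rcons eqxx addn1.
Qed.

Fixpoint histories (n : nat) : seq (seq nat) :=
  if n is n'.+1 then [seq rcons t j | t <- histories n', j <- iota 0 n'.+1]
  else [:: [::]].

Lemma histories_size n s : s \in histories n -> size s = n.
Proof.
elim: n s => [|n IH] s; first by rewrite inE => /eqP ->.
by move=> /allpairsP [[t j] [/IH h _ ->]]; rewrite size_rcons h.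
Qed.

Lemma uniq_histories n : uniq (histories n).
Proof.
elim: n => [|n IH] //; apply: allpairs_uniq => //; first exact: iota_uniq.
by move=> [t1 j1] [t2 j2] _ _ /= /rcons_inj [-> ->].
Qed.

Lemma big_histories_S (R : Type) (idx : R) (op : Monoid.law idx) n (F : seq nat -> R) :
  \big[op/idx]_(s <- histories n.+1) F s =
  \big[op/idx]_(t <- histories n) \big[op/idx]_(j < n.+1) F (rcons t j).
Proof.
rewrite big_allpairs_dep /=; apply: eq_bigr => t _.
by rewrite -(big_mkord predT (fun j => F (rcons t j))) /index_iota subn0.
Qed.

Lemma histories_take N n s : s \in histories N -> (n <= N)%N -> take n s \in histories n.
Proof.
elim: N s => [|N IH] s; first by rewrite inE leqn0 => /eqP -> /eqP ->.
move=> /allpairsP [[t j] [ht hj ->]]; have := histories_size ht.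
rewrite leq_eqVlt => t_size /orP [/eqP ->|].
  by rewrite take_oversize ?size_rcons ?t_size //; apply/allpairsP; exists (t, j).
by rewrite ltnS => hn; rewrite takel_rcons ?t_size //; exact: IH.
Qed.

Lemma histories_mem0 n s : s \in histories n -> (0 < n)%N -> 0 \in s.
Proof.
elim: n s => [|[|n] IH] s // /allpairsP [[t j] [ht hj ->]] _; rewrite mem_rcons inE.
  by move: hj; rewrite /= inE eq_sym => ->.
by rewrite (IH _ ht) ?orbT.
Qed.

Lemma histories_maxdeg_gt0 n s : s \in histories n -> (0 < n)%N -> (0 < maxdeg_seq s)%N.
Proof.
move=> hs n_gt0; apply: leq_trans _ (leq_deg_maxdeg_seq (leq0n (size s))).
by rewrite /deg_out -has_count has_pred1 (histories_mem0 hs).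
Qed.

Local Open Scope ring_scope.

Section PathWeight.
Variables (R : realType) (f : nat -> R).
Hypothesis f_gt0 : forall i, 0 < f i.

Lemma Zpart_gt0 s : 0 < Zpart f s.
Proof.
rewrite /Zpart big_ord_recl ltr_pwDl ?f_gt0 //.
by apply: sumr_ge0 => i _; apply: ltW.
Qed.

Lemma step_prob_ord s (j : 'I_(size s).+1) : step_prob f s j = f (deg_out s j) / Zpart f s.
Proof. by rewrite /step_prob -ltnS ltn_ord. Qed.

Lemma step_prob_ge0 s j : 0 <= step_prob f s j.
Proof. by rewrite /step_prob; case: ifP => // _; rewrite divr_ge0 // ltW ?Zpart_gt0. Qed.

Lemma sum_step_prob s : \sum_(j < (size s).+1) step_prob f s j = 1.
Proof.
under eq_bigr => j _ do rewrite step_prob_ord.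
by rewrite -mulr_suml divff // gt_eqF // Zpart_gt0.
Qed.

Lemma path_weight_rcons t j : path_weight f (rcons t j) = path_weight f t * step_prob f t j.
Proof.
rewrite /path_weight size_rcons big_ord_recr /= takel_rcons // take_size.
rewrite nth_rcons ltnn eqxx; congr (_ * _); apply: eq_bigr => i _.
by rewrite takel_rcons ?nth_rcons ?ltn_ord // ltnW.
Qed.

Lemma path_weight_ge0 s : 0 <= path_weight f s.
Proof. by apply: prodr_ge0 => i _; apply: step_prob_ge0. Qed.

Lemma sum_path_weight n : \sum_(s <- histories n) path_weight f s = 1.
Proof.
elim: n => [|n IH]; first by rewrite big_seq1 /path_weight big_ord0.
rewrite big_histories_S -IH big_seq [RHS]big_seq; apply: eq_bigr => t /histories_size t_size.
under eq_bigr do rewrite path_weight_rcons.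
by rewrite -mulr_sumr -t_size sum_step_prob mulr1.
Qed.

End PathWeight.

Section Products.
Variable R : realType.

Definition hprod (m : nat) : R := \prod_(i < m) (1 - (2 * i.+1%:R)^-1).

Definition aprod (kappa : R) (n : nat) : R :=
  \prod_(k < n) (1 - (2 * kappa * (2 * k + 1)%:R)^-1).

Lemma hprodS m : hprod m.+1 = hprod m * (1 - (2 * m.+1%:R)^-1).
Proof. by rewrite /hprod big_ord_recr. Qed.

Lemma aprodS kappa n :
  aprod kappa n.+1 = aprod kappa n * (1 - (2 * kappa * (2 * n + 1)%:R)^-1).
Proof. by rewrite /aprod big_ord_recr. Qed.

Lemma one_sub_inv_gt0 (x : R) : 1 < x -> 0 < 1 - x^-1.
Proof. by move=> x_gt1; rewrite subr_gt0 invf_lt1 // (lt_trans ltr01). Qed.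

Lemma hprod_factor_gt0 m : 0 < 1 - (2 * m.+1%:R)^-1 :> R.
Proof.
apply: one_sub_inv_gt0; have : 1 <= m.+1%:R :> R by rewrite ler1n.
lra.
Qed.

Lemma hprod_gt0 m : 0 < hprod m.
Proof. by apply: prodr_gt0 => i _; apply: hprod_factor_gt0. Qed.

Lemma hprod_nonincreasing : nonincreasing_seq hprod.
Proof. by apply/nonincreasing_seqP => m; rewrite hprodS ger_pMr ?hprod_gt0. Qed.

Lemma hprod_sqr_ge m : (0 < m)%N -> 1 <= 4 * m%:R * hprod m ^+ 2.
Proof.
elim: m => [//|[|m] IH] _.
  by rewrite hprodS /hprod big_ord0 mul1r; rewrite expr2; lra.
have {}IH := IH isT; have h_gt0 := hprod_gt0 m.+1.
rewrite hprodS; set H := hprod m.+1 in IH h_gt0 *.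
have -> : 4 * m.+2%:R * (H * (1 - (2 * m.+2%:R)^-1)) ^+ 2
    = H ^+ 2 * (2 * m.+1%:R + 1) ^+ 2 / m.+2%:R.
  by rewrite -[m.+2]addn1 natrD; field; rewrite gt_eqF // ltr_wpDl.
rewrite ler_pdivlMr ?ltr0n // mul1r -[m.+2]addn1 natrD.
have : 1 <= m.+1%:R :> R by rewrite ler1n.
set x := m.+1%:R in IH *; nra.
Qed.

Variable kappa : R.
Hypothesis kappa_gt_half : 1 < 2 * kappa.

Lemma aprod_factor_gt0 k : 0 < 1 - (2 * kappa * (2 * k + 1)%:R)^-1.
Proof.
apply/one_sub_inv_gt0/(lt_le_trans kappa_gt_half).
by rewrite ler_peMr ?ler1n ?addn1 // ltW // (lt_trans ltr01).
Qed.

Lemma aprod_gt0 n : 0 < aprod kappa n.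
Proof. by apply: prodr_gt0 => i _; apply: aprod_factor_gt0. Qed.

Lemma aprod_le_expR n :
  aprod kappa n <= expR (- \sum_(k < n) (2 * kappa * (2 * k + 1)%:R)^-1).
Proof.
rewrite -sumrN expR_sum; apply: ler_prod => k _.
by rewrite ltW ?aprod_factor_gt0 //= expR_ge1Dx.
Qed.

Lemma ln_odd_le_sum n : ln (2 * n + 1)%:R <= \sum_(k < n) 2 / (2 * k + 1)%:R :> R.
Proof.
elim: n => [|n IH]; first by rewrite muln0 add0n ln1 big_ord0.
rewrite big_ord_recr /=.
have odd_gt0 : 0 < (2 * n + 1)%:R :> R by rewrite ltr0n addn1.
have -> : (2 * n.+1 + 1)%:R = (2 * n + 1)%:R * (1 + 2 / (2 * n + 1)%:R) :> R.
  rewrite mulrDr mulr1 mulrCA divff ?gt_eqF // mulr1 -natrD; congr (_%:R); lia.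
have q_gt0 : 0 < 2 / (2 * n + 1)%:R :> R by rewrite divr_gt0.
by rewrite lnM ?posrE // ?addr_gt0 //; apply: lerD => //; apply: le_ln1Dx; lra.
Qed.

Lemma aprod_sqr_le_powR n : (0 < n)%N -> aprod kappa n ^+ 2 <= n%:R `^ (- (2 * kappa)^-1).
Proof.
move=> n_gt0; have kappa_gt0 : 0 < kappa by move: kappa_gt_half; lra.
set S := \sum_(k < n) (2 * kappa * (2 * k + 1)%:R)^-1.
have a_le : aprod kappa n ^+ 2 <= expR (- S) ^+ 2.
  by rewrite !expr2 ler_pM ?aprod_le_expR // ltW ?aprod_gt0.
apply: le_trans a_le _; rewrite -expRM_natl /powR gt_eqF ?ltr0n // ler_expR.
have -> : S = (4 * kappa)^-1 * \sum_(k < n) 2 / (2 * k + 1)%:R.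
  rewrite /S mulr_sumr; apply: eq_bigr => k _.
  by field; rewrite gt_eqF ?ltr0n ?addn1 //= gt_eqF.
have ln_le : ln n%:R <= ln (2 * n + 1)%:R :> R.
  by rewrite ler_ln ?posrE ?ltr0n ?addn1 // ler_nat; lia.
have c_gt0 : 0 < (4 * kappa)^-1 by rewrite invr_gt0; lra.
have := ler_wpM2l (ltW c_gt0) (le_trans ln_le (ln_odd_le_sum n)).
have -> : - (2 * kappa)^-1 * ln n%:R = - 2 * ((4 * kappa)^-1 * ln n%:R).
  by field; lra.
lra.
Qed.

Lemma hprod_lt_aprod_bound c m n : (0 < m)%N -> (0 < n)%N -> hprod m < c * aprod kappa n ->
  (4 * c ^+ 2)^-1 <= m%:R * n%:R `^ (- (2 * kappa)^-1).
Proof.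
move=> m_gt0 n_gt0 h_lt; have h_gt0 := hprod_gt0 m; have a_gt0 := aprod_gt0 n.
have c_gt0 : 0 < c by rewrite -(pmulr_lgt0 _ a_gt0) (lt_trans h_gt0).
have h2_le : hprod m ^+ 2 <= c ^+ 2 * n%:R `^ (- (2 * kappa)^-1).
  apply: (@le_trans _ _ ((c * aprod kappa n) ^+ 2)).
    by rewrite ler_sqr ?nnegrE ?ltW ?mulr_gt0.
  by rewrite exprMn ler_wpM2l ?sqr_ge0 ?aprod_sqr_le_powR.
have m4_ge0 : 0 <= 4 * m%:R :> R by rewrite mulr_ge0.
have h2_ge := hprod_sqr_ge m_gt0; have h2_le' := ler_wpM2l m4_ge0 h2_le.
rewrite -[leLHS]div1r ler_pdivrMr ?mulr_gt0 ?exprn_gt0 //; lra.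
Qed.

End Products.

Section Supermartingale.
Variables (R : realType) (f : nat -> R) (kappa : R).
Hypothesis f_gt0 : forall i, 0 < f i.
Hypothesis f_regular : forall n i : nat, (i <= n)%N ->
  f i / i.+1%:R <= kappa * (f n / n.+1%:R).

Lemma kappa_ge1 : 1 <= kappa.
Proof.
have := f_regular (leqnn 0); rewrite divr1 => f0_le.
by rewrite -(ler_pM2r (f_gt0 0)) mul1r.
Qed.

Lemma Zpart_le_maxdeg s :
  Zpart f s <= kappa * (f (maxdeg_seq s) / (maxdeg_seq s).+1%:R) * (2 * size s + 1)%:R.
Proof.
set C := kappa * _.
have C_ge0 : 0 <= C by apply: le_trans (f_regular (leq0n _)); rewrite divr_ge0 ?ltW.
apply: (@le_trans _ _ (\sum_(j < (size s).+1) C * (deg_out s j + 1)%:R)).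
  apply: ler_sum => j _; rewrite -ler_pdivrMr ?ltr0n ?addn1 //.
  by apply/f_regular/leq_deg_maxdeg_seq; rewrite -ltnS.
rewrite -mulr_sumr ler_wpM2l // -natr_sum ler_nat big_split /= sum1_card card_ord.
by apply: leq_trans (leq_add (sum_deg_out_le s) (leqnn _)) _; lia.
Qed.

Lemma step_prob_argmax_ge s u : (u <= size s)%N -> maxdeg_seq s = deg_out s u ->
  (2 * kappa * (2 * size s + 1)%:R)^-1 <= step_prob f s u / (2 * (maxdeg_seq s).+1%:R).
Proof.
move=> us hu; have Z_le := Zpart_le_maxdeg s.
have kappa_gt0 : 0 < kappa := lt_le_trans ltr01 kappa_ge1.
rewrite /step_prob us -hu.
have Z_gt0 := Zpart_gt0 f_gt0 s; have F_gt0 := f_gt0 (maxdeg_seq s).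
move: Z_le Z_gt0 F_gt0; set Z := Zpart f s; set F := f _.
set m := (maxdeg_seq s).+1%:R; set N := (2 * size s + 1)%:R => Z_le Z_gt0 F_gt0.
have m_gt0 : 0 < m by rewrite ltr0n.
have N_gt0 : 0 < N by rewrite ltr0n addn1.
have -> : F / Z / (2 * m) = (2 * m * Z / F)^-1.
  by rewrite !invfM invrK; field; rewrite ?gt_eqF.
rewrite lef_pV2 ?posrE ?divr_gt0 ?mulr_gt0 // ler_pdivrMr //.
have := ler_wpM2l (ltW m_gt0) Z_le.
have -> : m * (kappa * (F / m) * N) = kappa * N * F by field; rewrite gt_eqF.
nra.
Qed.

Lemma hprod_maxdeg_step s u : (u <= size s)%N -> maxdeg_seq s = deg_out s u ->
  \sum_(j < (size s).+1) step_prob f s j * hprod R (maxdeg_seq (rcons s j))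
  <= hprod R (maxdeg_seq s) * (1 - step_prob f s u / (2 * (maxdeg_seq s).+1%:R)).
Proof.
move=> us hu; set H := hprod R (maxdeg_seq s).
pose gap (j : nat) := H - hprod R (maxdeg_seq (rcons s j)).
have gap_ge0 j : 0 <= gap j.
  by rewrite subr_ge0; apply/hprod_nonincreasing/maxdeg_seq_rcons.
have gap_u : H * (2 * (maxdeg_seq s).+1%:R)^-1 <= gap u.
  have : hprod R (maxdeg_seq (rcons s u)) <= hprod R (maxdeg_seq s).+1.
    exact/hprod_nonincreasing/maxdeg_seq_rcons_argmax.
  rewrite hprodS /gap mulrBr mulr1 -/H; set y := H / _; lra.
rewrite [leLHS](_ : _ = H - \sum_(j < (size s).+1) step_prob f s j * gap j); last first.
  under [in RHS]eq_bigr do rewrite mulrBr.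
  by rewrite sumrB -mulr_suml sum_step_prob // mul1r opprB addrC subrK.
rewrite (bigD1 (inord u)) //= inordK ?ltnS //.
have rest_ge0 : 0 <= \sum_(j < (size s).+1 | j != inord u) step_prob f s j * gap j.
  by apply: sumr_ge0 => j _; rewrite mulr_ge0 ?step_prob_ge0.
have := ler_wpM2l (step_prob_ge0 f_gt0 s u) gap_u.
set p := step_prob f s u; set x := (2 * _)^-1 => pg_le.
rewrite [leRHS](_ : _ = H - p * (H * x)); last by ring.
set y := p * (H * x) in pg_le *; lra.
Qed.

Definition potential (s : seq nat) : R := hprod R (maxdeg_seq s) / aprod kappa (size s).

Lemma two_kappa_gt1 : 1 < 2 * kappa.
Proof. by apply: lt_le_trans (ler_wpM2l _ kappa_ge1); rewrite ?mulr1 ?ltr1n. Qed.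

Lemma potential_gt0 s : 0 < potential s.
Proof. by rewrite divr_gt0 ?hprod_gt0 ?aprod_gt0 ?two_kappa_gt1. Qed.

Lemma potential_supermartingale s :
  \sum_(j < (size s).+1) step_prob f s j * potential (rcons s j) <= potential s.
Proof.
have [u us hu] := maxdeg_seq_argmax s.
have a_gt0 := aprod_gt0 two_kappa_gt1 (size s).
have q_gt0 := aprod_factor_gt0 two_kappa_gt1 (size s).
under eq_bigr do rewrite /potential size_rcons aprodS mulrA.
rewrite -mulr_suml ler_pdivrMr ?mulr_gt0 // /potential mulrA divfK ?gt_eqF //.
apply: le_trans (hprod_maxdeg_step us hu) _.
apply: ler_wpM2l; first exact/ltW/hprod_gt0.
by rewrite lerD2l lerN2 step_prob_argmax_ge.
Qed.

Definition reaches (c : R) (s : seq nat) : bool :=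
  has (fun k => c <= potential (take k s)) (iota 0 (size s).+1).

Definition stopped_potential (c : R) (s : seq nat) : R :=
  if reaches c s then c else potential s.

Lemma reaches_rcons c t j :
  reaches c (rcons t j) = reaches c t || (c <= potential (rcons t j)).
Proof.
rewrite /reaches size_rcons -addn1 iotaD has_cat add0n has_seq1 take_oversize ?size_rcons //.
congr (_ || _); apply: eq_in_has => k; rewrite mem_iota add0n ltnS => /andP [_ hk].
by rewrite takel_rcons.
Qed.

Lemma stopped_potential_supermartingale c t :
  \sum_(j < (size t).+1) step_prob f t j * stopped_potential c (rcons t j)
  <= stopped_potential c t.
Proof.
rewrite /stopped_potential; case: ifP => reached.
  under eq_bigr do rewrite reaches_rcons reached /=.
  by rewrite -mulr_suml sum_step_prob // mul1r.
apply: le_trans (potential_supermartingale t); apply: ler_sum => j _.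
rewrite ler_wpM2l ?step_prob_ge0 // reaches_rcons reached /=.
by case: ifP.
Qed.

Lemma sum_stopped_potential_le c N :
  \sum_(s <- histories N) path_weight f s * stopped_potential c s <= stopped_potential c [::].
Proof.
elim: N => [|N IH]; first by rewrite big_seq1 /path_weight big_ord0 mul1r.
rewrite big_histories_S; apply: le_trans IH; rewrite big_seq [leRHS]big_seq.
apply: ler_sum => t /histories_size t_size.
under eq_bigr do rewrite path_weight_rcons -mulrA.
rewrite -mulr_sumr ler_wpM2l ?path_weight_ge0 // -t_size.
exact: stopped_potential_supermartingale.
Qed.

Lemma maximal_inequality c N : 1 < c ->
  1 - c^-1 <= \sum_(s <- histories N | ~~ reaches c s) path_weight f s.
Proof.
move=> c_gt1; have c_gt0 : 0 < c by apply: lt_trans c_gt1.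
have potential_nil : potential [::] = 1.
  by rewrite /potential /maxdeg_seq big_ord1 /hprod /aprod !big_ord0 divr1.
have stopped_nil : stopped_potential c [::] = 1.
  by rewrite /stopped_potential /reaches /= potential_nil orbF lt_geF.
have reached_le : c * \sum_(s <- histories N | reaches c s) path_weight f s <= 1.
  rewrite -stopped_nil; apply: le_trans (sum_stopped_potential_le c N).
  rewrite mulr_sumr big_mkcond /=; apply: ler_sum => s _.
  rewrite /stopped_potential; case: ifP => _; first by rewrite mulrC.
  by rewrite mulr_ge0 ?path_weight_ge0 // ltW ?potential_gt0.
have := sum_path_weight f_gt0 N; rewrite (bigID (reaches c)) /=.
have : \sum_(s <- histories N | reaches c s) path_weight f s <= c^-1.
  by rewrite -(ler_pM2l c_gt0) mulfV ?gt_eqF.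
lra.
Qed.

Lemma unreached_maxdeg_bound c N s n : s \in histories N -> ~~ reaches c s ->
  (1 <= n <= N)%N -> (4 * c ^+ 2)^-1 <= (maxdeg_seq (take n s))%:R * n%:R `^ (- (2 * kappa)^-1).
Proof.
move=> hs unreached /andP[n_gt0 nN]; have ht := histories_take hs nN.
apply: (hprod_lt_aprod_bound two_kappa_gt1 (c := c) (histories_maxdeg_gt0 ht n_gt0) n_gt0).
rewrite -ltr_pdivrMr ?aprod_gt0 ?two_kappa_gt1 // ltNge.
apply: contra unreached => c_le; apply/hasP; exists n.
  by rewrite mem_iota (histories_size hs) ltnS nN.
by rewrite /potential (histories_size ht).
Qed.

End Supermartingale.

Section HistoryOfProcess.
Variables (T : Type) (J : nat -> T -> nat).

Lemma hist_S n w : hist J n.+1 w = rcons (hist J n w) (J n w).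
Proof. by rewrite /hist -addn1 iotaD map_cat /= cats1. Qed.

Lemma size_hist n w : size (hist J n w) = n.
Proof. by rewrite /hist size_map size_iota. Qed.

Lemma take_hist n N w : (n <= N)%N -> take n (hist J N w) = hist J n w.
Proof. by move=> h; rewrite /hist -map_take take_iota (minn_idPl h). Qed.

Lemma maxdeg_take_hist n N w : (n <= N)%N ->
  maxdeg J n w = maxdeg_seq (take n (hist J N w)).
Proof. by move=> h; rewrite take_hist // /maxdeg_seq size_hist. Qed.

End HistoryOfProcess.

Local Open Scope classical_set_scope.

Lemma measure_bigcap_nonincreasing_ge d (T : measurableType d) (R : realType)
    (mu : {measure set T -> \bar R}) (F : (set T)^nat) (x : \bar R) :
  (mu (F 0%N) < +oo)%E -> (forall n, measurable (F n)) -> nonincreasing_seq F ->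
  (forall n, x <= mu (F n))%E -> (x <= mu (\bigcap_n F n))%E.
Proof.
move=> F0_fin F_meas F_noninc x_le.
have := nonincreasing_cvg_mu F0_fin F_meas (bigcapT_measurable F_meas) F_noninc.
by move=> /(lee_cvg_to (cvg_cst x)); apply; apply: nearW.
Qed.

Section GPAProbability.
Variables (R : realType) (d : measure_display) (T : measurableType d).
Variables (P : probability T R) (f : nat -> R) (J : nat -> T -> nat).
Hypothesis J_GPA : is_GPA P f J.

Lemma measurable_hist n (Q : seq nat -> Prop) : measurable [set w | Q (hist J n w)].
Proof.
have [J_meas _] := J_GPA.
elim: n Q => [|n IH] Q.
  have [q|nq] := pselect (Q [::]).
    by rewrite (_ : [set w | _] = setT) //; apply/seteqP; split => w.
  by rewrite (_ : [set w | _] = set0) //; apply/seteqP; split => w.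
rewrite (_ : [set w | _] =
    \bigcup_j ([set w | J n w = j] `&` [set w | Q (rcons (hist J n w) j)])).
  apply: bigcupT_measurable => j; apply: measurableI; first exact: J_meas.
  exact: (IH (fun t => Q (rcons t j))).
apply/seteqP; split => w /=; rewrite hist_S; first by exists (J n w).
by case=> j _ [<-].
Qed.

Lemma measurable_maxdeg_upto (A : nat -> nat -> Prop) N :
  measurable [set w | forall n, (1 <= n <= N)%N -> A n (maxdeg J n w)].
Proof.
pose Q t := forall n, (1 <= n <= N)%N -> A n (maxdeg_seq (take n t)).
rewrite (_ : [set w | _] = [set w | Q (hist J N w)]); first exact: measurable_hist.
apply/seteqP; split => w /= h n /[dup] /andP[_ nN] /h.
  by rewrite (maxdeg_take_hist _ _ nN).
by rewrite -(maxdeg_take_hist _ _ nN).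
Qed.

Lemma probability_hist_mem N (L : seq (seq nat)) : uniq L -> {in L, forall s, size s = N} ->
  P [set w | hist J N w \in L] = (\sum_(s <- L) path_weight f s)%:E.
Proof.
have [_ P_hist] := J_GPA.
elim: L => [|s L IH] /=.
  move=> _ _; rewrite big_nil (_ : [set w | _] = set0) ?measure0 //.
  by apply/seteqP; split => w.
move=> /andP [sL uL] L_size; rewrite big_cons EFinD.
rewrite (_ : [set w | _] = [set w | hist J N w = s] `|` [set w | hist J N w \in L]); last first.
  apply/seteqP; split => w /=; rewrite inE; first by case/orP => [/eqP|]; [left | right].
  by case => [->|->]; rewrite ?eqxx ?orbT.
rewrite measureU; first last.
- by apply/seteqP; split => w // [/= -> ]; rewrite (negbTE sL).
- exact: (measurable_hist N (fun t => t \in L)).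
- exact: (measurable_hist N (fun t => t = s)).
rewrite -P_hist (L_size s (mem_head _ _)) -IH // => t tL.
by apply: L_size; rewrite inE tL orbT.
Qed.

Variable kappa : R.
Hypothesis f_gt0 : forall i, 0 < f i.
Hypothesis f_regular : forall n i : nat, (i <= n)%N ->
  f i / i.+1%:R <= kappa * (f n / n.+1%:R).

Lemma probability_maxdeg_bound_upto (c : R) N : 1 < c ->
  ((1 - c^-1)%:E <= P [set w | forall n, (1 <= n <= N)%N ->
      ((4 * c ^+ 2)^-1 <= (maxdeg J n w)%:R * n%:R `^ (- (2 * kappa)^-1))%R])%E.
Proof.
move=> c_gt1; pose L := [seq s <- histories N | ~~ reaches kappa c s].
apply: (@le_trans _ _ (P [set w | hist J N w \in L])).
  rewrite probability_hist_mem ?filter_uniq ?uniq_histories //; last first.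
    by move=> s; rewrite mem_filter => /andP[_ /histories_size].
  by rewrite big_filter lee_fin (maximal_inequality f_gt0 f_regular).
apply: le_measure; rewrite ?inE; first exact: (measurable_hist N (fun t => t \in L)).
  exact: (measurable_maxdeg_upto
    (fun n m => (4 * c ^+ 2)^-1 <= m%:R * n%:R `^ (- (2 * kappa)^-1))).
move=> w; rewrite /= mem_filter => /andP[unreached hw] n /[dup] /andP[_ nN] n_range.
rewrite (maxdeg_take_hist _ _ nN).
exact: (unreached_maxdeg_bound f_gt0 f_regular hw unreached n_range).
Qed.

End GPAProbability.

Theorem lemma3p12 (R : realType) (d : measure_display) (T : measurableType d)
  (P : probability T R) (f : nat -> R) (J : nat -> T -> nat)
  (hf : forall i, 0 < f i)
  (kappa : R) (hkappa : 0 < kappa)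
  (hmax : forall n i : nat, (i <= n)%N ->
            f i / (i.+1)%:R <= kappa * (f n / (n.+1)%:R))
  (hJ : is_GPA P f J)
  (eps : R) (heps : 0 < eps) :
  exists r : R, 0 < r /\
    ((1 - eps)%:E <=
      P [set w : T | forall n : nat, (1 <= n)%N ->
           (r <= (maxdeg J n w)%:R * (n%:R `^ (- (2 * kappa)^-1)))%R])%E.
Proof.
pose c := 1 + eps^-1; have c_gt1 : 1 < c by rewrite ltrDl invr_gt0.
have c_gt0 : 0 < c := lt_trans ltr01 c_gt1.
exists (4 * c ^+ 2)^-1; split; first by rewrite invr_gt0 mulr_gt0 ?exprn_gt0.
pose A n m := ((4 * c ^+ 2)^-1 <= m%:R * n%:R `^ (- (2 * kappa)^-1))%R.
pose H N := [set w | forall n, (1 <= n <= N)%N -> A n (maxdeg J n w)].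
rewrite (_ : [set w | _] = \bigcap_N H N); last first.
  apply/seteqP; split => w /= hw; first by move=> N _ n /andP[+ _]; exact: hw.
  by move=> n n_gt0; apply: (hw n I); rewrite n_gt0 leqnn.
apply: measure_bigcap_nonincreasing_ge => [| | |N].
- exact: le_lt_trans (probability_le1 P (measurable_maxdeg_upto hJ A 0)) (ltry 1).
- exact: measurable_maxdeg_upto hJ A.
- apply/nonincreasing_seqP => N; apply/subsetPset => w hw n /andP[n_gt0 nN].
  by apply: hw; rewrite n_gt0 ltnW.
apply: le_trans (probability_maxdeg_bound_upto hJ hf hmax N c_gt1).
rewrite lee_fin lerD2l lerN2.
by rewrite -[leRHS]invrK lef_pV2 ?posrE ?invr_gt0 // lerDr.
Qed.
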